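(* Let $\mathcal{F}$ be a family of pairwise intersecting compact convex sets in the plane. Then for any distinct $A,B,C,D\in\mathcal{F}$, if $o(ABD)=o(BCD)=o(CAD)=1$ then $o(ABC)=1$.
   Context: For three pairwise intersecting compact convex sets $A,B,C$ in the plane: $o(ABC)=0$ if $A\cap B\cap C\neq\emptyset$; otherwise $o(ABC)=o(xyz)$ for any $x\in B\cap C$, $y\in A\cap C$, $z\in A\cap B$, where for points $o(xyz)=+1$ if $x,y,z$ form a counterclockwise triangle and $-1$ if clockwise (this is known to be independent of the choice of $x,y,z$, and the points are never collinear in this case). *)

From HB Require Import structures.
From mathcomp Require Import all_boot all_order all_algebra.
From mathcomp Require Import all_classical all_reals topology normedtype.
Set Implicit Arguments. Unset Strict Implicit. Unset Printing Implicit Defensive.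
Import Order.TTheory GRing.Theory Num.Theory.
Import numFieldNormedType.Exports.
Local Open Scope classical_set_scope.
Local Open Scope ring_scope.


Definition convex_set2 (R : realType) (A : set ((R * R)%type)) : Prop :=
  forall x y, A x -> A y -> forall t : R, 0 <= t <= 1 ->
    A (t * x.1 + (1 - t) * y.1, t * x.2 + (1 - t) * y.2).

Definition ccw (R : realType) (x y z : (R * R)%type) : Prop :=
  0 < (y.1 - x.1) * (z.2 - x.2) - (y.2 - x.2) * (z.1 - x.1).

(* o(ABC): 0 if A∩B∩C is nonempty; otherwise o(xyz) for points
   x ∈ B∩C, y ∈ A∩C, z ∈ A∩B (+1 if some such triple is ccw, else -1;
   by the known independence fact this agrees with "any choice"). *)
Definition orient (R : realType) (A B C : set ((R * R)%type)) : int :=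
  if `[< A `&` B `&` C !=set0 >] then 0%R
  else if `[< exists x y z : (R * R)%type,
                 (B `&` C) x /\ (A `&` C) y /\ (A `&` B) z /\ ccw x y z >]
       then 1%R else (-1)%R.

(** The orientation [o(XYZ)] of three pairwise intersecting convex sets with
    empty common intersection is the sign of [det3 x y z] for ANY choice of
    [x ∈ Y∩Z], [y ∈ X∩Z], [z ∈ X∩Y]: a collinear choice would put a point in
    [X∩Y∩Z], so the sign cannot change while one point moves along a segment.

    First, [A∩B∩C] is empty: a point [p] of it sees points of [A∩D], [B∩D],
    [C∩D] counterclockwise around it, so [p] lies in their triangle, hence in
    [D].  If [o(ABC)] were [-1], the four sets would be "alternating": every
    pair [X,Y] would have opposite orientations with the two remaining sets.
    Pick in each of the six pairwise intersections its point of least norm and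
    consider the pair where this least norm is maximal.  Moving the four other
    chosen points of [X] and of [Y] (all of norm at most the maximum [M]) until
    the sign changes produces a collinear configuration, and strict convexity
    of the squared norm then yields a point of [X∩Y] of norm [< M]. *)
From HB Require Import structures.
From mathcomp Require Import all_boot all_order all_algebra.
From mathcomp Require Import all_classical all_reals topology normedtype derive.
From mathcomp Require Import ring lra.
Import Order.TTheory GRing.Theory Num.Theory.
Import numFieldNormedType.Exports.
Local Open Scope classical_set_scope.
Local Open Scope ring_scope.

Section Plane.
Local Set Implicit Arguments.
Local Unset Strict Implicit.
Variable R : realType.
Local Notation point := (R * R)%type.
Implicit Types (x y z p q r u v w : point) (X Y Z : set point) (t : R).

Definition det3 x y z : R :=
  (y.1 - x.1) * (z.2 - x.2) - (y.2 - x.2) * (z.1 - x.1).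

Definition comb t x y : point :=
  (t * x.1 + (1 - t) * y.1, t * x.2 + (1 - t) * y.2).

Definition on_segment x y p := exists2 t, 0 <= t <= 1 & p = comb t x y.

Definition sqnorm p : R := p.1 ^+ 2 + p.2 ^+ 2.

(* For pairwise intersecting convex sets, equivalent to [o(XYZ) = 1]
   ([ccw_on_of_orient], [orient_of_ccw_on]). *)
Definition ccw_on X Y Z := forall x y z,
  Y x -> Z x -> X y -> Z y -> X z -> Y z -> 0 < det3 x y z.

Lemma det3_rotate x y z : det3 x y z = det3 y z x.
Proof. by rewrite /det3; ring. Qed.

Lemma det3_swap x y z : det3 y x z = - det3 x y z.
Proof. by rewrite /det3; ring. Qed.

Lemma det3_combl t x x' y z :
  det3 (comb t x x') y z = t * det3 x y z + (1 - t) * det3 x' y z.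
Proof. by rewrite /det3 /comb /=; ring. Qed.

Lemma det3_combm t x y y' z :
  det3 x (comb t y y') z = t * det3 x y z + (1 - t) * det3 x y' z.
Proof. by rewrite /det3 /comb /=; ring. Qed.

Lemma comb1 x y : comb 1 x y = x.
Proof. by case: x => a b; rewrite /comb /=; congr pair; ring. Qed.

Lemma comb0 x y : comb 0 x y = y.
Proof. by case: y => a b; rewrite /comb /=; congr pair; ring. Qed.

Lemma combxx t x : comb t x x = x.
Proof. by case: x => a b; rewrite /comb /=; congr pair; ring. Qed.

Lemma mem_comb X t x y :
  convex_set2 X -> X x -> X y -> 0 <= t <= 1 -> X (comb t x y).
Proof. by move=> cX Xx Xy t01; apply: cX. Qed.

Lemma mem_on_segment X x y p :
  convex_set2 X -> X x -> X y -> on_segment x y p -> X p.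
Proof. by move=> cX Xx Xy [t t01 ->]; apply: mem_comb. Qed.

Lemma segment_root (a b : R) :
  0 < a -> b <= 0 -> exists2 t, 0 <= t <= 1 & t * a + (1 - t) * b = 0.
Proof.
move=> a0 b0; have ab0 : 0 < a - b by lra.
exists (- b / (a - b)); last by field; rewrite gt_eqF.
by rewrite divr_ge0 ?ler_pdivrMr /=; lra.
Qed.

(* The coefficient [s] is the projection of [r - p] on [q - p], divided by
   [|q - p|^2]. *)
Lemma collinear_comb p q r : det3 p q r = 0 -> p != q -> exists s, r = comb s q p.
Proof.
case: p q r => [p1 p2] [q1 q2] [r1 r2]; rewrite /det3 /comb /= => pqr0 pq.
set w := (q1 - p1) ^+ 2 + (q2 - p2) ^+ 2.
have w0 : w != 0.
  apply: contra pq; rewrite paddr_eq0 ?sqr_ge0 // !sqrf_eq0 !subr_eq0.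
  by case/andP => /eqP-> /eqP->.
set s := ((q1 - p1) * (r1 - p1) + (q2 - p2) * (r2 - p2)) / w.
have e1 : (r1 - p1) * w = s * w * (q1 - p1).
  rewrite divfK //; apply/eqP; rewrite -subr_eq0.
  rewrite (_ : _ - _ = - (q2 - p2) * ((q1 - p1) * (r2 - p2) - (q2 - p2) * (r1 - p1))).
    by rewrite pqr0 mulr0.
  by rewrite /w; ring.
have e2 : (r2 - p2) * w = s * w * (q2 - p2).
  rewrite divfK //; apply/eqP; rewrite -subr_eq0.
  rewrite (_ : _ - _ = (q1 - p1) * ((q1 - p1) * (r2 - p2) - (q2 - p2) * (r1 - p1))).
    by rewrite pqr0 mulr0.
  by rewrite /w; ring.
exists s; congr pair; apply: (mulIf w0).
- by rewrite -[r1 * w](subrK (p1 * w)) -mulrBl e1; ring.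
- by rewrite -[r2 * w](subrK (p2 * w)) -mulrBl e2; ring.
Qed.

Lemma collinear_on_segment p q r : det3 p q r = 0 ->
  [\/ on_segment q p r, on_segment q r p | on_segment r p q].
Proof.
move=> pqr0; have [<-|pq] := eqVneq p q.
  by apply: Or33; exists 0; rewrite ?lexx ?ler01 ?comb0.
have [s ->] := collinear_comb pqr0 pq.
have [s0|s0] := ltP s 0.
  apply: Or32; exists (- s / (1 - s)).
    by rewrite divr_ge0 ?ler_pdivrMr /=; lra.
  have s1 : 1 - s != 0 by rewrite gt_eqF //; lra.
  by case: p q {pqr0 pq} => [p1 p2] [q1 q2]; rewrite /comb /=; congr pair; field.
have [s1|s1] := leP s 1; first by apply: Or31; exists s => //; apply/andP.
apply: Or33; exists s^-1.
  by rewrite invr_ge0 invf_le1 /=; lra.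
have sn0 : s != 0 by rewrite gt_eqF //; lra.
by case: p q {pqr0 pq} => [p1 p2] [q1 q2]; rewrite /comb /=; congr pair; field.
Qed.

Lemma sqnorm_comb t p q : sqnorm (comb t p q) =
  t * sqnorm p + (1 - t) * sqnorm q
  - t * (1 - t) * ((p.1 - q.1) ^+ 2 + (p.2 - q.2) ^+ 2).
Proof. by rewrite /sqnorm /comb /=; ring. Qed.

Lemma sqnorm_comb_le t p q M : 0 <= t <= 1 ->
  sqnorm p <= M -> sqnorm q <= M -> sqnorm (comb t p q) <= M.
Proof.
move=> /andP[t0 t1] pM qM; rewrite sqnorm_comb.
have d0 : 0 <= (p.1 - q.1) ^+ 2 + (p.2 - q.2) ^+ 2 by rewrite addr_ge0 ?sqr_ge0.
have : 0 <= t * (1 - t) * ((p.1 - q.1) ^+ 2 + (p.2 - q.2) ^+ 2).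
  by rewrite !mulr_ge0 // subr_ge0.
have : 0 <= t * (M - sqnorm p) by rewrite mulr_ge0 // subr_ge0.
have : 0 <= (1 - t) * (M - sqnorm q) by rewrite mulr_ge0 // subr_ge0.
lra.
Qed.

Lemma sqnorm_comb_lt t p q M : 0 <= t <= 1 ->
  sqnorm p <= M -> sqnorm q <= M -> comb t p q <> p -> comb t p q <> q ->
  sqnorm (comb t p q) < M.
Proof.
move=> /andP[t0 t1] pM qM tp tq.
have t0' : 0 < t by rewrite lt_def t0 andbT; apply/eqP => t_0; apply: tq; rewrite t_0 comb0.
have t1' : t < 1 by rewrite lt_def t1 andbT; apply/eqP => t_1; apply: tp; rewrite -t_1 comb1.
have d0 : 0 < (p.1 - q.1) ^+ 2 + (p.2 - q.2) ^+ 2.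
  rewrite lt_def addr_ge0 ?sqr_ge0 // andbT paddr_eq0 ?sqr_ge0 // !sqrf_eq0 !subr_eq0.
  apply/negP => /andP[/eqP e1 /eqP e2]; apply: tp.
  by rewrite [q]surjective_pairing -e1 -e2 -surjective_pairing combxx.
have : 0 < t * (1 - t) * ((p.1 - q.1) ^+ 2 + (p.2 - q.2) ^+ 2).
  by rewrite !mulr_gt0 // subr_gt0.
have : 0 <= t * (M - sqnorm p) by rewrite mulr_ge0 // subr_ge0.
have : 0 <= (1 - t) * (M - sqnorm q) by rewrite mulr_ge0 // ?subr_ge0 // ltW.
rewrite sqnorm_comb; lra.
Qed.

Lemma exists_min_sqnorm (K : set point) : compact K -> K !=set0 ->
  exists2 m, K m & forall p, K p -> sqnorm m <= sqnorm p.
Proof.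
move=> cK K0.
have csq : {within K, continuous sqnorm}.
  apply: continuous_subspaceT => p; rewrite /sqnorm.
  by apply: cvgD; apply: cvgM; (try apply: cvg_fst); try apply: cvg_snd.
have [m /set_mem Km min_m] := compact_EVT_min K0 cK csq.
by exists m => // p Kp; apply: min_m; apply/mem_set.
Qed.

(* The hypotheses place [p] inside the triangle [a b c]; its barycentric
   coordinates are proportional to the three determinants. *)
Lemma convex_triangle X a b c p : convex_set2 X -> X a -> X b -> X c ->
  0 < det3 b a p -> 0 < det3 c b p -> 0 < det3 a c p -> X p.
Proof.
move=> cX Xa Xb Xc bap cbp acp.
set S := det3 b a p + det3 c b p + det3 a c p.
set S' := det3 a c p + det3 b a p.
have S0 : 0 < S by rewrite /S; lra.
have S'0 : 0 < S' by rewrite /S'; lra.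
have -> : p = comb (det3 c b p / S) a (comb (det3 a c p / S') b c).
  have := gt_eqF S0; have := gt_eqF S'0; rewrite /S /S'.
  clear S0 S'0 S S' bap cbp acp cX Xa Xb Xc.
  case: a b c p => [a1 a2] [b1 b2] [c1 c2] [p1 p2].
  by rewrite /det3 /comb /= => S'0 S0; congr pair; field; rewrite ?S0 ?S'0.
apply: mem_comb => //; first apply: mem_comb => //.
  by rewrite divr_ge0 ?ler_pdivrMr ?ltW //= /S'; lra.
by rewrite divr_ge0 ?ler_pdivrMr ?ltW //= /S; lra.
Qed.

Section EmptyMeet.
Variables X Y Z : set point.
Hypotheses (cX : convex_set2 X) (cY : convex_set2 Y) (cZ : convex_set2 Z).
Hypothesis XYZ0 : forall p, X p -> Y p -> Z p -> False.

Lemma det3_neq0 x y z :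
  Y x -> Z x -> X y -> Z y -> X z -> Y z -> det3 x y z != 0.
Proof.
move=> Yx Zx Xy Zy Xz Yz; apply/eqP => /collinear_on_segment[] seg.
- by apply: (XYZ0 Xz Yz); apply: mem_on_segment seg.
- by apply: (XYZ0 _ Yx Zx); apply: mem_on_segment seg.
- by apply: (XYZ0 Xy _ Zy); apply: mem_on_segment seg.
Qed.

Lemma det3_pos_movel x x' y z :
  Y x -> Z x -> Y x' -> Z x' -> X y -> Z y -> X z -> Y z ->
  0 < det3 x y z -> 0 < det3 x' y z.
Proof.
move=> Yx Zx Yx' Zx' Xy Zy Xz Yz xyz; rewrite ltNge; apply/negP => x'yz.
have [t t01 root] := segment_root xyz x'yz.
have := det3_neq0 (mem_comb cY Yx Yx' t01) (mem_comb cZ Zx Zx' t01) Xy Zy Xz Yz.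
by rewrite det3_combl root eqxx.
Qed.

End EmptyMeet.

Lemma ccw_on_intro X Y Z x y z :
  convex_set2 X -> convex_set2 Y -> convex_set2 Z ->
  (forall p, X p -> Y p -> Z p -> False) ->
  Y x -> Z x -> X y -> Z y -> X z -> Y z -> 0 < det3 x y z -> ccw_on X Y Z.
Proof.
move=> cX cY cZ XYZ0 Yx Zx Xy Zy Xz Yz xyz x' y' z' Yx' Zx' Xy' Zy' Xz' Yz'.
have YZX0 p : Y p -> Z p -> X p -> False by move=> Yp Zp Xp; apply: XYZ0 Xp Yp Zp.
have ZXY0 p : Z p -> X p -> Y p -> False by move=> Zp Xp Yp; apply: XYZ0 Xp Yp Zp.
have := det3_pos_movel cX cY cZ XYZ0 Yx Zx Yx' Zx' Xy Zy Xz Yz xyz.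
rewrite det3_rotate => /(det3_pos_movel cY cZ cX YZX0 Zy Xy Zy' Xy' Yz Xz Yx' Zx').
rewrite det3_rotate => /(det3_pos_movel cZ cX cY ZXY0 Xz Yz Xz' Yz' Zx' Yx' Zy' Xy').
by rewrite det3_rotate.
Qed.

Lemma ccw_on_rotate X Y Z : ccw_on X Y Z -> ccw_on Y Z X.
Proof.
move=> XYZ x y z Zx Xx Yy Xy Yz Zz.
by rewrite det3_rotate det3_rotate; apply: XYZ.
Qed.

Lemma ccw_on_disjoint X Y Z p : ccw_on X Y Z -> X p -> Y p -> Z p -> False.
Proof.
move=> XYZ Xp Yp Zp; have := XYZ p p p Yp Zp Xp Zp Xp Yp.
by rewrite /det3 !subrr ltxx.
Qed.

Lemma ccw_on_of_orient X Y Z :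
  convex_set2 X -> convex_set2 Y -> convex_set2 Z ->
  orient X Y Z = 1 -> ccw_on X Y Z.
Proof.
move=> cX cY cZ; rewrite /orient; case: asboolP => [//|XYZ].
case: asboolP => [[x [y [z [[Yx Zx] [[Xy Zy] [[Xz Yz] xyz]]]]]] _|//].
apply: (ccw_on_intro cX cY cZ _ Yx Zx Xy Zy Xz Yz xyz).
by move=> p Xp Yp Zp; apply: XYZ; exists p.
Qed.

Lemma orient_of_ccw_on X Y Z x y z : ccw_on X Y Z ->
  Y x -> Z x -> X y -> Z y -> X z -> Y z -> orient X Y Z = 1.
Proof.
move=> XYZ Yx Zx Xy Zy Xz Yz; rewrite /orient.
case: asboolP => [[p [[Xp Yp] Zp]]|_]; first by case: (ccw_on_disjoint XYZ Xp Yp Zp).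
case: asboolP => // -[]; exists x, y, z.
by do !split => //; apply: XYZ.
Qed.

Lemma ccw_on_cycle_disjoint X Y Z W a b c p : convex_set2 W ->
  ccw_on X Y W -> ccw_on Y Z W -> ccw_on Z X W ->
  X a -> W a -> Y b -> W b -> Z c -> W c -> X p -> Y p -> Z p -> False.
Proof.
move=> cW XYW YZW ZXW Xa Wa Yb Wb Zc Wc Xp Yp Zp.
apply: (ccw_on_disjoint XYW Xp Yp).
apply: (convex_triangle cW Wa Wb Wc).
- exact: XYW.
- exact: YZW.
- exact: ZXW.
Qed.

Lemma meet_point_lt_collinear X Y u v z M : convex_set2 X -> convex_set2 Y ->
  Y u -> X v -> X z -> Y z -> det3 u v z = 0 ->
  sqnorm u <= M -> sqnorm v <= M ->
  (X u -> sqnorm u < M) -> (Y v -> sqnorm v < M) ->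
  exists2 w, (X `&` Y) w & sqnorm w < M.
Proof.
move=> cX cY Yu Xv Xz Yz uvz0 uM vM Xu_lt Yv_lt.
have [Xu|nXu] := pselect (X u); first by exists u => //; apply: Xu_lt.
have [Yv|nYv] := pselect (Y v); first by exists v => //; apply: Yv_lt.
exists z => //; case/collinear_on_segment: uvz0 => [[t t01 ez]|seg|seg].
- rewrite ez; apply: sqnorm_comb_lt => // zeq.
  + by apply: nYv; rewrite -zeq -ez.
  + by apply: nXu; rewrite -zeq -ez.
- by case: nXu; apply: mem_on_segment seg.
- by case: nYv; apply: mem_on_segment seg.
Qed.

(* Moving [u0] to [u1] inside [Y], and then [v0] to [v1] inside [X], the sign
   of [det3 u v z] changes, so it vanishes at some intermediate position. *)
Lemma meet_point_lt_sign_change X Y z u0 u1 v0 v1 M :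
  convex_set2 X -> convex_set2 Y -> X z -> Y z ->
  Y u0 -> Y u1 -> X v0 -> X v1 -> ~ X u0 -> ~ X u1 -> ~ Y v0 -> ~ Y v1 ->
  sqnorm u0 <= M -> sqnorm u1 <= M -> sqnorm v0 <= M -> sqnorm v1 <= M ->
  0 < det3 u0 v0 z -> det3 u1 v1 z < 0 ->
  exists2 w, (X `&` Y) w & sqnorm w < M.
Proof.
move=> cX cY Xz Yz Yu0 Yu1 Xv0 Xv1 nXu0 nXu1 nYv0 nYv1 u0M u1M v0M v1M pos neg.
have [u1v0|u1v0] := leP (det3 u1 v0 z) 0.
- have [t t01 root] := segment_root pos u1v0.
  apply: (meet_point_lt_collinear cX cY (mem_comb cY Yu0 Yu1 t01) Xv0 Xz Yz).
  + by rewrite det3_combl.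
  + exact: sqnorm_comb_le.
  + by [].
  + by move=> Xu; apply: sqnorm_comb_lt => // eu; [apply: nXu0 | apply: nXu1];
      rewrite -eu.
  + by move/nYv0.
- have [t t01 root] := segment_root u1v0 (ltW neg).
  apply: (meet_point_lt_collinear cX cY Yu1 (mem_comb cX Xv0 Xv1 t01) Xz Yz).
  + by rewrite det3_combm.
  + by [].
  + exact: sqnorm_comb_le.
  + by move/nXu1.
  + by move=> Yv; apply: sqnorm_comb_lt => // ev; [apply: nYv0 | apply: nYv1];
      rewrite -ev.
Qed.

Lemma min_sqnorm_lt X Y U V m xu xv yu yv M :
  convex_set2 X -> convex_set2 Y -> ccw_on X Y U -> ccw_on Y X V ->
  X m -> Y m -> (forall p, X p -> Y p -> sqnorm m <= sqnorm p) ->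
  X xu -> U xu -> X xv -> V xv -> Y yu -> U yu -> Y yv -> V yv ->
  sqnorm xu <= M -> sqnorm xv <= M -> sqnorm yu <= M -> sqnorm yv <= M ->
  sqnorm m < M.
Proof.
move=> cX cY XYU YXV Xm Ym min_m Xxu Uxu Xxv Vxv Yyu Uyu Yyv Vyv xuM xvM yuM yvM.
have [w [Xw Yw] wM] : exists2 w, (X `&` Y) w & sqnorm w < M.
  apply: (meet_point_lt_sign_change cX cY Xm Ym Yyu Yyv Xxu Xxv) => //.
  - by move=> Xyu; apply: (ccw_on_disjoint XYU Xyu Yyu Uyu).
  - by move=> Xyv; apply: (ccw_on_disjoint YXV Yyv Xyv Vyv).
  - by move=> Yxu; apply: (ccw_on_disjoint XYU Xxu Yxu Uxu).
  - by move=> Yxv; apply: (ccw_on_disjoint YXV Yxv Xxv Vxv).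
  - exact: XYU.
  - by rewrite det3_swap oppr_lt0; apply: YXV.
exact: le_lt_trans (min_m w Xw Yw) wM.
Qed.

Lemma no_alternating_ccw_on (F : set (set point)) A B C D :
  (forall K, F K -> compact K) -> (forall K, F K -> convex_set2 K) ->
  (forall K L, F K -> F L -> K `&` L !=set0) ->
  F A -> F B -> F C -> F D ->
  ccw_on A B D -> ccw_on B C D -> ccw_on C A D -> ccw_on B A C -> False.
Proof.
move=> hcomp hconv hint hA hB hC hD ABD BCD CAD BAC.
have closest K L : F K -> F L ->
    exists m, [/\ K m, L m & forall p, K p -> L p -> sqnorm m <= sqnorm p].
  move=> FK FL.
  have cKL : compact (K `&` L).
    by apply: compact_closedI (hcomp _ FK) (compact_closed _ (hcomp _ FL)).
  have [m [Km Lm] min_m] := exists_min_sqnorm cKL (hint _ _ FK FL).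
  by exists m; split=> // p Kp Lp; apply: min_m.
have [cA cB] := (hconv _ hA, hconv _ hB).
have [cC cD] := (hconv _ hC, hconv _ hD).
have [mab [Amab Bmab minab]] := closest _ _ hA hB.
have [mbc [Bmbc Cmbc minbc]] := closest _ _ hB hC.
have [mca [Cmca Amca minca]] := closest _ _ hC hA.
have [mda [Dmda Amda minda]] := closest _ _ hD hA.
have [mbd [Bmbd Dmbd minbd]] := closest _ _ hB hD.
have [mcd [Cmcd Dmcd mincd]] := closest _ _ hC hD.
pose M := Num.max (Num.max (sqnorm mab) (Num.max (sqnorm mbc) (sqnorm mca)))
                  (Num.max (sqnorm mda) (Num.max (sqnorm mbd) (sqnorm mcd))).
have [lab lbc lca] : [/\ sqnorm mab <= M, sqnorm mbc <= M & sqnorm mca <= M].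
  by rewrite !le_max !lexx !orbT.
have [lda lbd lcd] : [/\ sqnorm mda <= M, sqnorm mbd <= M & sqnorm mcd <= M].
  by rewrite !le_max !lexx !orbT.
have ltab := min_sqnorm_lt cA cB ABD BAC Amab Bmab minab
  Amda Dmda Amca Cmca Bmbd Dmbd Bmbc Cmbc lda lca lbd lbc.
have ltbc := min_sqnorm_lt cB cC BCD (ccw_on_rotate (ccw_on_rotate BAC))
  Bmbc Cmbc minbc Bmbd Dmbd Bmab Amab Cmcd Dmcd Cmca Amca lbd lab lcd lca.
have ltca := min_sqnorm_lt cC cA CAD (ccw_on_rotate BAC) Cmca Amca minca
  Cmcd Dmcd Cmbc Bmbc Amda Dmda Amab Bmab lcd lbc lda lab.
have ltda := min_sqnorm_lt cD cA (ccw_on_rotate (ccw_on_rotate ABD))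
  (ccw_on_rotate CAD) Dmda Amda minda
  Dmbd Bmbd Dmcd Cmcd Amab Bmab Amca Cmca lbd lcd lab lca.
have ltbd := min_sqnorm_lt cB cD (ccw_on_rotate ABD)
  (ccw_on_rotate (ccw_on_rotate BCD)) Bmbd Dmbd minbd
  Bmab Amab Bmbc Cmbc Dmda Amda Dmcd Cmcd lab lbc lda lcd.
have ltcd := min_sqnorm_lt cC cD (ccw_on_rotate BCD)
  (ccw_on_rotate (ccw_on_rotate CAD)) Cmcd Dmcd mincd
  Cmbc Bmbc Cmca Amca Dmbd Bmbd Dmda Amda lbc lca lbd lda.
have : M < M by rewrite {1}/M !gt_max ltab ltbc ltca ltda ltbd ltcd.
by rewrite ltxx.
Qed.

End Plane.

Theorem lemma2 (R : realType) (F : set (set ((R * R)%type)))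
  (hcomp : forall K, F K -> compact K)
  (hconv : forall K, F K -> convex_set2 K)
  (hint : forall K L, F K -> F L -> K `&` L !=set0)
  (A B C D : set ((R * R)%type))
  (hA : F A) (hB : F B) (hC : F C) (hD : F D)
  (hAB : A <> B) (hAC : A <> C) (hAD : A <> D)
  (hBC : B <> C) (hBD : B <> D) (hCD : C <> D) :
  orient A B D = 1 -> orient B C D = 1 -> orient C A D = 1 ->
  orient A B C = 1.
Proof.
have [cA cB] := (hconv _ hA, hconv _ hB).
have [cC cD] := (hconv _ hC, hconv _ hD).
move=> /(ccw_on_of_orient cA cB cD) ABD /(ccw_on_of_orient cB cC cD) BCD.
move=> /(ccw_on_of_orient cC cA cD) CAD.
have [ad [Aad Dad]] := hint _ _ hA hD.
have [bd [Bbd Dbd]] := hint _ _ hB hD.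
have [cd [Ccd Dcd]] := hint _ _ hC hD.
have ABC0 p : A p -> B p -> C p -> False.
  exact: ccw_on_cycle_disjoint cD ABD BCD CAD Aad Dad Bbd Dbd Ccd Dcd.
have [ab [Aab Bab]] := hint _ _ hA hB.
have [bc [Bbc Cbc]] := hint _ _ hB hC.
have [ca [Cca Aca]] := hint _ _ hC hA.
have := det3_neq0 cA cB cC ABC0 Bbc Cbc Aca Cca Aab Bab.
rewrite neq_lt => /orP[neg|pos]; last first.
  apply: (orient_of_ccw_on _ Bbc Cbc Aca Cca Aab Bab).
  exact: ccw_on_intro cA cB cC ABC0 Bbc Cbc Aca Cca Aab Bab pos.
case: (no_alternating_ccw_on hcomp hconv hint hA hB hC hD ABD BCD CAD).
apply: (ccw_on_intro cB cA cC _ Aca Cca Bbc Cbc Bab Aab).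
  by move=> p Bp Ap Cp; apply: ABC0 Ap Bp Cp.
by rewrite det3_swap oppr_gt0.
Qed.
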